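(* Let $G=(V,E)$ be a graph with $n=|V|$ vertices and maximum degree at most $B$, and let $k\le n$ be a nonnegative integer. Construct the graph $G'=(V',E')$ as follows. For each $v\in V$ add a copy of the complete bipartite graph $K_{B+1,B+2}$ (the choice gadget of $v$, with smaller side $S_v$ of $B+1$ vertices and larger side $L_v$ of $B+2$ vertices); add a vertex $v_d$ together with $B-d(v)+1$ new pendant vertices (leaves) adjacent only to $v_d$, where $d(v)$ is the degree of $v$ in $G$; and for each $u\in N[v]$ (closed neighbourhood of $v$ in $G$) add an edge from a vertex of $L_v$ to $u_d$, using distinct vertices of $L_v$ for distinct $u\in N[v]$. Define capacities $c(v_d)=B+1$ for all $v\in V$ and $c(w)=\deg_{G'}(w)$ for all other vertices $w$ of $G'$. Then $G'$ has maximum degree $B+2$, $|E'|=n(B+2)^2$, and $G$ has a dominating set of size at most $k$ if and only if $G'$ has a capacitated vertex cover (with respect to $c$) of size at most $|E'|/(B+2)+k=n(B+2)+k$.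
   Context: A dominating set of $G$ is a set $S\subseteq V$ such that every vertex of $G$ is in $S$ or adjacent to a vertex of $S$. Given a graph with vertex capacities $c:V\to\mathbb{Z}_{\ge 0}$, a capacitated vertex cover is a set $C$ of vertices together with an assignment of every edge to one of its endpoints lying in $C$ such that each $w\in C$ is assigned at most $c(w)$ edges. *)

From mathcomp Require Import all_boot.
Set Implicit Arguments. Unset Strict Implicit. Unset Printing Implicit Defensive.

Section Graphs.
Variable T : finType.
Implicit Types (e : rel T).

(* A (simple) graph on T is a symmetric irreflexive relation e. *)
Definition deg e (v : T) : nat := #|[set u | e v u]|.
Definition closedN e (v : T) : {set T} := v |: [set u | e v u].

Definition num_edges e : nat :=
  #|[set [set p.1; p.2] | p in [set p : T * T | e p.1 p.2]]|.

Definition dominating e (D : {set T}) : Prop :=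
  forall v, v \in D \/ exists2 u, u \in D & e v u.

(* Capacitated vertex cover: a set C with an assignment a of every edge
   {x,y} (a x y = a y x) to one of its endpoints lying in C, such that
   each w in C is assigned at most c w edges. *)
Definition cap_vc e (c : T -> nat) (C : {set T}) (a : T -> T -> T) : Prop :=
  (forall x y, e x y ->
     [/\ a x y = a y x, (a x y == x) || (a x y == y) & a x y \in C]) /\
  (forall w, w \in C -> #|[set y | e w y & a w y == w]| <= c w).
End Graphs.

Section Construction.
Variables (V : finType) (e : rel V) (B : nat).

(* leaves of v_d: indices l < B - d(v) + 1 *)
Definition leafT := {p : V * 'I_(B+1) | p.2 < B - deg e p.1 + 1}.

(* vertices of G':  S_v (B+1 vertices), L_v (B+2 vertices), v_d, leaves *)
Definition Vtx : finType :=
  ((V * 'I_(B+1)) + (V * 'I_(B+2)) + (V + leafT))%type.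

Definition Svtx v (i : 'I_(B+1)) : Vtx := inl (inl (v, i)).
Definition Lvtx v (j : 'I_(B+2)) : Vtx := inl (inr (v, j)).
Definition Dvtx v : Vtx := inr (inl v).

(* f v u : the vertex of L_v joined to u_d, for u in N[v]. *)
Variable f : V -> V -> 'I_(B+2).

Definition half_adj (x y : Vtx) : bool :=
  match x, y with
  | inl (inl (v, _)), inl (inr (u, _)) => v == u
  | inl (inr (v, j)), inr (inl u) => (u \in closedN e v) && (f v u == j)
  | inr (inr l), inr (inl u) => (sval l).1 == u
  | _, _ => false
  end.

Definition gadj : rel Vtx := fun x y => half_adj x y || half_adj y x.

Definition cap (w : Vtx) : nat :=
  match w with
  | inr (inl _) => B + 1
  | _ => deg gadj w
  end.
End Construction.
Arguments gadj {V} e {B} f.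
Arguments cap {V} e {B} f w.

From mathcomp Require Import all_boot.
From mathcomp Require Import zify.
Set Implicit Arguments. Unset Strict Implicit. Unset Printing Implicit Defensive.

(* The graph G' is studied through the orientation half_adj of its edges
   (S_v -> L_v -> u_d <- leaf), which turns degrees into out-degree plus
   in-degree and counts each edge once at its head: this gives the maximum
   degree B + 2 and |E'| = n(B + 2)^2, since every L_v vertex has in-degree
   B + 1, every u_d in-degree B + 2, and no other vertex has in-neighbours.

   A cover is measured gadget by gadget: load C v counts the vertices of C in
   S_v, in L_v, and among v_d and its leaves.  Any capacitated cover has load
   at least B + 2 at every v (one side of K_{B+1,B+2} plus a leaf edge), and
   the vertices of load >= B + 3 dominate G: a light v has L_v outside C and
   v_d in C, and v_d, of capacity B + 1 but degree B + 2, must hand an edge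
   to some L_w in C, with w a neighbour of v whose load is then >= B + 3.
   Conversely a dominating set D gives the cover with load B + 2 + [v \in D],
   taking L_v for v in D, S_v otherwise, and every v_d. *)

Lemma card_set_sum (T : finType) (P : pred T) : #|[set y | P y]| = \sum_y (P y : nat).
Proof.
by rewrite -sum1_card big_mkcond /=; apply: eq_bigr => y _; rewrite inE; case: (P y).
Qed.

Section Counting.
Variable T : finType.

Lemma sum_const_indicator (A : {set T}) c : \sum_x (c + (x \in A)) = #|T| * c + #|A|.
Proof.
rewrite big_split sum_nat_const cardT -cardE -(card_set_sum (mem A)); congr (_ + _).
by apply: eq_card => x; rewrite inE.
Qed.

Lemma card_pairs (P : rel T) :
  #|[set p : T * T | P p.1 p.2]| = \sum_x #|[set y | P x y]|.
Proof.
rewrite (card_set_sum (fun p : T * T => P p.1 p.2)) -(pair_bigA _ (fun x y => P x y : nat)).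
by apply: eq_bigr => x _; rewrite card_set_sum.
Qed.

Variable h : rel T.
Hypotheses (h_irr : irreflexive h) (h_asym : forall x y, h x y -> ~~ h y x).

Lemma deg_orient w :
  deg (fun x y => h x y || h y x) w = #|[set y | h w y]| + #|[set y | h y w]|.
Proof.
rewrite -cardsUI (_ : _ :&: _ = set0) ?cards0 ?addn0.
  by apply: eq_card => y; rewrite !inE.
by apply/setP => y; rewrite !inE; apply/andP => -[/h_asym/negP].
Qed.

(* Each edge {x, y} corresponds to exactly one arc of the orientation, so the
   number of edges is the sum of the in-degrees. *)
Lemma num_edges_orient :
  num_edges (fun x y => h x y || h y x) = \sum_y #|[set x | h x y]|.
Proof.
rewrite -(card_pairs (fun y x => h x y)) /num_edges.
have -> : [set [set p.1; p.2] | p in [set p : T * T | h p.1 p.2 || h p.2 p.1]] =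
          [set [set p.1; p.2] | p in [set p : T * T | h p.2 p.1]].
  apply/setP => z; apply/imsetP/imsetP => -[[x y]]; rewrite inE /= => hxy ->.
    case/orP: hxy => hxy; last by exists (x, y); rewrite ?inE.
    by exists (y, x); rewrite ?inE // setUC.
  by exists (x, y); rewrite // inE hxy orbT.
apply: card_in_imset => -[x1 y1] [x2 y2]; rewrite !inE /= => h1 h2 E.
have : (x1 \in [set x2; y2]) && (y1 \in [set x2; y2]) by rewrite -E !inE !eqxx orbT.
rewrite !inE => /andP[/orP[]/eqP ex /orP[]/eqP ey]; subst.
- by rewrite h_irr in h1.
- by [].
- by rewrite (negbTE (h_asym h1)) in h2.
- by rewrite h_irr in h1.
Qed.

End Counting.

Section CapacitatedCover.
Variables (T : finType) (g : rel T) (c : T -> nat) (C : {set T}) (a : T -> T -> T).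
Hypothesis C_cover : cap_vc g c C a.

Lemma cap_vc_cover x y : g x y -> (x \in C) || (y \in C).
Proof.
case: C_cover => hC _ /hC [_ /orP[]/eqP E]; rewrite E => ->; by rewrite ?orbT.
Qed.

Lemma cap_vc_offload w : w \in C -> c w < deg g w ->
  exists y, [/\ g w y, a w y = y & y \in C].
Proof.
case: C_cover => hC hcap wC wover.
case: (pickP [pred y | g w y & a w y != w]) => [y /andP[gwy ayw] | none].
  have [_ /orP[/eqP ay|/eqP ay] ayC] := hC w y gwy; first by rewrite ay eqxx in ayw.
  by exists y; split; rewrite // -ay.
suff : deg g w <= c w by rewrite leqNgt wover.
apply: leq_trans (hcap w wC); apply: subset_leq_card; apply/subsetP => y.
by rewrite !inE => gwy; move: (none y); rewrite /= gwy /= => /negbFE ->.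
Qed.

End CapacitatedCover.

Section Reduction.
Variables (V : finType) (e : rel V) (B : nat) (f : V -> V -> 'I_(B+2)).
Hypotheses (e_sym : symmetric e) (e_irr : irreflexive e)
    (degB : forall v, deg e v <= B)
    (f_inj : forall v, {in closedN e v &, injective (f v)}).

Notation VT := (Vtx e B).
Notation half := (@half_adj V e B f).

Definition Leaf (l : leafT e B) : VT := inr (inr l).

Lemma half_irr : irreflexive half.
Proof. by case=> [[[v i]|[v j]]|[u|l]]. Qed.

Lemma half_asym x y : half x y -> ~~ half y x.
Proof. by case: x => [[[v i]|[v j]]|[u|l]]; case: y => [[[w i']|[w j']]|[u'|l']]. Qed.

Lemma in_closedN u v : (u \in closedN e v) = (u == v) || e v u.
Proof. by rewrite !inE. Qed.

Lemma closedN_sym u v : (u \in closedN e v) = (v \in closedN e u).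
Proof. by rewrite !in_closedN eq_sym e_sym. Qed.

Lemma card_closedN v : #|closedN e v| = (deg e v).+1.
Proof. by rewrite cardsU1 inE e_irr. Qed.

Definition leaves u : {set leafT e B} := [set l | (val l).1 == u].

Lemma card_leaves u : #|leaves u| = B - deg e u + 1.
Proof.
have leB : B - deg e u + 1 <= B + 1 by rewrite leq_add2r leq_subr.
pose mk (i : 'I_(B - deg e u + 1)) : leafT e B :=
  exist _ (u, widen_ord leB i) (ltn_ord i).
have -> : leaves u = mk @: setT.
  apply/setP => l; rewrite !inE; apply/idP/imsetP => [|[i _ ->]] //.
  case: l => [[w i] /= hi] /eqP Hw; subst w.
  by exists (Ordinal hi) => //; apply: val_inj; congr pair; apply: val_inj.
rewrite card_imset ?cardsT ?card_ord // => i j.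
by move/(congr1 (fun l : leafT e B => nat_of_ord (val l).2)) => /= /val_inj.
Qed.

Definition Sside v : {set VT} := Svtx e v @: setT.
Definition Lside v : {set VT} := Lvtx e v @: setT.

Lemma card_Sside v : #|Sside v| = B + 1.
Proof. by rewrite card_imset ?cardsT ?card_ord // => i j [->]. Qed.

Lemma card_Lside v : #|Lside v| = B + 2.
Proof. by rewrite card_imset ?cardsT ?card_ord // => i j [->]. Qed.

Definition outs (w : VT) : {set VT} := [set y | half w y].
Definition ins (w : VT) : {set VT} := [set y | half y w].

Lemma deg_gadj w : deg (gadj e f) w = #|outs w| + #|ins w|.
Proof. by rewrite /gadj (deg_orient half_asym). Qed.

Lemma outs_S v i : outs (Svtx e v i) = Lside v.
Proof.
apply/setP => y; rewrite !inE; case: y => [[[w i']|[w j']]|[u'|l']] /=;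
  try by apply/esym/imsetP => -[].
by apply/eqP/imsetP => [<-|[j _ [->]]] //; exists j'.
Qed.

Lemma ins_S v i : ins (Svtx e v i) = set0.
Proof. by apply/setP => -[[[w i']|[w j']]|[u'|l']]; rewrite !inE. Qed.

(* L_v j has at most one out-neighbour, since f v is injective on N[v]. *)
Lemma card_outs_L v j : #|outs (Lvtx e v j)| <= 1.
Proof.
apply/card_le1_eqP => y1 y2; rewrite !inE.
case: y1 => [[[? ?]|[? ?]]|[u1|?]] //; case: y2 => [[[? ?]|[? ?]]|[u2|?]] //=.
by case/andP=> h1 /eqP e1 /andP[h2 /eqP e2]; rewrite (f_inj h1 h2) // e1 e2.
Qed.

Lemma ins_L v j : ins (Lvtx e v j) = Sside v.
Proof.
apply/setP => y; rewrite !inE; case: y => [[[w i']|[w j']]|[u'|l']] /=;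
  try by apply/esym/imsetP => -[].
by apply/eqP/imsetP => [<-|[i _ [->]]] //; exists i'.
Qed.

Lemma outs_D u : outs (Dvtx e B u) = set0.
Proof. by apply/setP => -[[[w i']|[w j']]|[u'|l']]; rewrite !inE. Qed.

Lemma ins_D u :
  ins (Dvtx e B u) = (fun w => Lvtx e w (f w u)) @: closedN e u :|: Leaf @: leaves u.
Proof.
apply/setP => y; rewrite !inE; case: y => [[[w i']|[w j']]|[u'|l']] /=.
- by apply/esym/norP; split; apply/imsetP => -[].
- apply/idP/orP => [/andP[h /eqP <-]|[/imsetP[w' hw [-> ->]]|/imsetP[]] //].
    by left; apply/imsetP; exists w; rewrite // closedN_sym.
  by rewrite -closedN_sym hw eqxx.
- by apply/esym/norP; split; apply/imsetP => -[].
- apply/idP/orP => [h|[/imsetP[] //|/imsetP[l h [->]]]].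
    by right; apply/imsetP; exists l'; rewrite // inE.
  by move: h; rewrite inE.
Qed.

Lemma card_ins_D u : #|ins (Dvtx e B u)| = B + 2.
Proof.
rewrite ins_D cardsU (_ : _ :&: _ = set0) ?cards0 ?subn0; last first.
  by apply/setP => y; rewrite !inE; apply/andP => -[/imsetP[? _ ->] /imsetP[]].
rewrite !card_imset ?card_closedN ?card_leaves; [|by move=> ? ? []..].
by have := degB u; lia.
Qed.

Lemma outs_Leaf l : outs (Leaf l) = [set Dvtx e B (val l).1].
Proof.
apply/setP => -[[[w i']|[w j']]|[u'|l']]; rewrite !inE //=.
by rewrite eq_sym; apply/eqP/eqP => [->|[]].
Qed.

Lemma ins_Leaf l : ins (Leaf l) = set0.
Proof. by apply/setP => -[[[w i']|[w j']]|[u'|l']]; rewrite !inE. Qed.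

Lemma deg_gadj_le w : deg (gadj e f) w <= B + 2.
Proof.
rewrite deg_gadj; case: w => [[[v i]|[v j]]|[u|l]].
- by rewrite outs_S ins_S card_Lside cards0 addn0.
- rewrite ins_L card_Sside addnC -addnA leq_add2l.
  exact: leq_trans (card_outs_L v j) _.
- by rewrite outs_D cards0 card_ins_D.
- by rewrite outs_Leaf ins_Leaf cards1 cards0; lia.
Qed.

Lemma deg_D u : deg (gadj e f) (Dvtx e B u) = B + 2.
Proof. by rewrite deg_gadj outs_D cards0 card_ins_D. Qed.

Lemma card_ins w : #|ins w| =
  match w with inl (inl _) => 0 | inl (inr _) => B + 1 | inr (inl _) => B + 2 | inr (inr _) => 0 end.
Proof.
case: w => [[[v i]|[v j]]|[u|l]].
- by rewrite (ins_S v i) cards0.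
- by rewrite (ins_L v j) card_Sside.
- exact: card_ins_D.
- by rewrite (ins_Leaf l) cards0.
Qed.

Lemma num_edges_gadj : num_edges (gadj e f) = #|V| * (B + 2) ^ 2.
Proof.
rewrite (num_edges_orient half_irr half_asym) (eq_bigr _ (fun w _ => card_ins w)).
rewrite !big_sumType /= !sum_nat_const !cardT -!cardE !card_prod !card_ord.
by rewrite !muln0 add0n addn0 -mulnn; set n := #|V|; nia.
Qed.

Definition tail_owner (z : V + leafT e B) : V :=
  match z with inl u => u | inr l => (val l).1 end.

Definition nS (C : {set VT}) v := #|[set i | Svtx e v i \in C]|.
Definition nL (C : {set VT}) v := #|[set j | Lvtx e v j \in C]|.
Definition nT (C : {set VT}) v := #|[set z | (inr z : VT) \in C & tail_owner z == v]|.
Definition load (C : {set VT}) v := nS C v + nL C v + nT C v.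

(* The gadgets of the vertices of V partition the vertex set of G'. *)
Lemma card_by_gadgets (C : {set VT}) : #|C| = \sum_v load C v.
Proof.
transitivity #|[set x | x \in C]|; first by apply: eq_card => x; rewrite inE.
rewrite card_set_sum big_sumType big_sumType /= /load !big_split /=.
congr (_ + _ + _).
- transitivity (\sum_(p : V * 'I_(B+1)) (Svtx e p.1 p.2 \in C : nat)).
    by apply: eq_bigr => -[].
  rewrite -(pair_bigA _ (fun v i => (Svtx e v i \in C) : nat)).
  by apply: eq_bigr => v _; rewrite /nS card_set_sum.
- transitivity (\sum_(p : V * 'I_(B+2)) (Lvtx e p.1 p.2 \in C : nat)).
    by apply: eq_bigr => -[].
  rewrite -(pair_bigA _ (fun v j => (Lvtx e v j \in C) : nat)).
  by apply: eq_bigr => v _; rewrite /nL card_set_sum.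
rewrite (partition_big tail_owner predT) //=; apply: eq_bigr => v _.
by rewrite /nT card_set_sum big_mkcond /=; apply: eq_bigr => z _; rewrite andbC; case: ifP.
Qed.

Section FromDominatingSet.
Variable D : {set V}.
Hypothesis D_dom : dominating e D.

(* The cover built from D takes all of L_v for v in D, all of S_v for v not in
   D, and every v_d.  Vertices are ranked by a priority that is positive
   exactly on the cover, and each edge goes to its endpoint of higher
   priority: the vertices v_d only keep the edges not claimed by an L_w. *)
Definition priority (x : VT) : nat :=
  match x with
  | inl (inl (v, _)) => if v \in D then 0 else 2
  | inl (inr (v, _)) => if v \in D then 2 else 0
  | inr (inl _) => 1
  | inr (inr _) => 0
  end.

Definition dom_cover : {set VT} := [set x | 0 < priority x].

Definition dom_assign (x y : VT) : VT := if priority y < priority x then x else y.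

Lemma priority_edge x y : gadj e f x y -> priority x != priority y.
Proof.
rewrite /gadj; case: x => [[[v i]|[v j]]|[u|l]]; case: y => [[[w i']|[w j']]|[u'|l']] //=;
  rewrite ?orbF; do ?[by case: (_ \in D) | by move=> /eqP ->; case: (_ \in D)].
Qed.

Lemma dom_assign_edge x y : gadj e f x y ->
  [/\ dom_assign x y = dom_assign y x,
      (dom_assign x y == x) || (dom_assign x y == y) & dom_assign x y \in dom_cover].
Proof.
move/priority_edge; rewrite /dom_assign !inE.
by case: ltngtP => // [/(leq_ltn_trans _)|/(leq_ltn_trans _)] hpos _;
  rewrite eqxx ?orbT hpos.
Qed.

(* Capacities hold: only u_d has capacity below its degree, and u_d has an
   in-neighbour L_w with w in D (w dominates u) that takes its edge. *)
Lemma dom_assign_capacity w : w \in dom_cover ->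
  #|[set y | gadj e f w y & dom_assign w y == w]| <= cap e f w.
Proof.
have assigned_le : #|[set y | gadj e f w y & dom_assign w y == w]| <= deg (gadj e f) w.
  by apply: subset_leq_card; apply/subsetP => y; rewrite !inE => /andP[].
case: w assigned_le => [[[v i]|[v j]]|[u|l]] //= _ _.
have [x xD ux] : exists2 x, x \in D & u \in closedN e x.
  case: (D_dom u) => [uD|[x xD eux]]; first by exists u; rewrite // !inE eqxx.
  by exists x; rewrite // in_closedN e_sym eux orbT.
rewrite -ltnS (_ : (B + 1).+1 = deg (gadj e f) (Dvtx e B u)); last by rewrite deg_D; lia.
apply: proper_card; apply/properP; split.
  by apply/subsetP => y; rewrite !inE => /andP[].
exists (Lvtx e x (f x u)); rewrite !inE /gadj /= ux eqxx //=.
by rewrite /dom_assign /= xD.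
Qed.

Lemma load_dom_cover v : load dom_cover v = B + 2 + (v \in D).
Proof.
rewrite /load /nS /nL /nT.
have -> : [set i | Svtx e v i \in dom_cover] = if v \in D then set0 else setT.
  by apply/setP => i; case: ifP => vD; rewrite !inE /= vD.
have -> : [set j | Lvtx e v j \in dom_cover] = if v \in D then setT else set0.
  by apply/setP => j; case: ifP => vD; rewrite !inE /= vD.
have -> : [set z | (inr z : VT) \in dom_cover & tail_owner z == v] = [set inl v].
  by apply/setP => -[u|l]; rewrite !inE //= andbF.
by rewrite cards1; case: (v \in D); rewrite cards0 cardsT card_ord; lia.
Qed.

Lemma card_dom_cover : #|dom_cover| = #|V| * (B + 2) + #|D|.
Proof.
by rewrite card_by_gadgets (eq_bigr _ (fun v _ => load_dom_cover v)) sum_const_indicator.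
Qed.

Lemma cap_vc_of_dominating :
  cap_vc (gadj e f) (cap e f) dom_cover dom_assign.
Proof. by split; [exact: dom_assign_edge | exact: dom_assign_capacity]. Qed.

End FromDominatingSet.

Section ToDominatingSet.
Variables (C : {set VT}) (a : VT -> VT -> VT).
Hypothesis C_cover : cap_vc (gadj e f) (cap e f) C a.

Lemma side_covered v : nS C v = B + 1 \/ nL C v = B + 2.
Proof.
case: (boolP [forall i, Svtx e v i \in C]) => [/forallP allS|/forallPn[i iC]].
  left; rewrite /nS (_ : [set i | _] = setT) ?cardsT ?card_ord //.
  by apply/setP => i; rewrite !inE allS.
right; rewrite /nL (_ : [set j | _] = setT) ?cardsT ?card_ord //.
apply/setP => j; rewrite !inE.
have := @cap_vc_cover _ _ _ _ _ C_cover (Svtx e v i) (Lvtx e v j).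
by rewrite (negbTE iC) /gadj /= eqxx; apply.
Qed.

(* Covering an edge between v_d and one of its leaves. *)
Lemma tail_covered v : 0 < nT C v.
Proof.
have /card_gt0P[l] : 0 < #|leaves v| by rewrite card_leaves addn1.
rewrite inE => /eqP lv; apply/card_gt0P.
have := @cap_vc_cover _ _ _ _ _ C_cover (Leaf l) (Dvtx e B v).
rewrite /gadj /= lv eqxx => /(_ isT) /orP[lC|vC].
- by exists (inr l); rewrite !inE lC /= lv.
- by exists (inl v); rewrite !inE vC /=.
Qed.

Lemma load_ge v : B + 2 <= load C v.
Proof.
by have := side_covered v; have := tail_covered v; rewrite /load; lia.
Qed.

Lemma load_L v j : Lvtx e v j \in C -> B + 2 < load C v.
Proof.
move=> jC; have : 0 < nL C v by apply/card_gt0P; exists j; rewrite inE.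
by have := side_covered v; have := tail_covered v; rewrite /load; lia.
Qed.

Lemma load_leaf v l : (val l).1 = v -> Leaf l \in C -> Dvtx e B v \in C ->
  B + 2 < load C v.
Proof.
move=> lv lC vC; have : 1 < nT C v.
  apply: (@leq_trans #|[set inl v; inr l]|); first by rewrite cards2.
  apply/subset_leq_card/subsetP => z; rewrite !inE.
  by case/orP=> /eqP ->; rewrite /= ?lv ?lC ?vC eqxx.
by have := side_covered v; rewrite /load; lia.
Qed.

Definition dom_of_cover : {set V} := [set v | B + 2 < load C v].

Lemma dom_of_cover_dominating : dominating e dom_of_cover.
Proof.
move=> v; rewrite inE; case: (ltnP (B + 2) (load C v)) => [|light]; [by left | right].
have noL j : Lvtx e v j \notin C by apply/negP => /load_L; rewrite ltnNge light.
have vC : Dvtx e B v \in C.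
  have := @cap_vc_cover _ _ _ _ _ C_cover (Lvtx e v (f v v)) (Dvtx e B v).
  by rewrite (negbTE (noL _)) /gadj /= in_closedN !eqxx; apply.
(* v_d has capacity B + 1 < B + 2, so one of its edges is carried by a
   neighbour y in C; y lies in some L_w with w a neighbour of v in D. *)
have overloaded : cap e f (Dvtx e B v) < deg (gadj e f) (Dvtx e B v).
  by rewrite deg_D /=; lia.
have [y [vy _ yC]] := cap_vc_offload C_cover vC overloaded.
have : y \in outs (Dvtx e B v) :|: ins (Dvtx e B v) by rewrite !inE.
rewrite outs_D set0U ins_D inE => /orP[/imsetP[w vw Ey]|/imsetP[l lv Ey]].
- exists w; first by rewrite inE; apply: (load_L (j := f w v)); rewrite -Ey.
  move: vw; rewrite in_closedN => /orP[/eqP wv|//].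
  by move: yC; rewrite Ey wv (negbTE (noL _)).
- move: lv; rewrite inE => /eqP lv.
  by move: light; rewrite leqNgt (load_leaf lv) // -Ey.
Qed.

Lemma card_dom_of_cover : #|V| * (B + 2) + #|dom_of_cover| <= #|C|.
Proof.
rewrite -sum_const_indicator card_by_gadgets; apply: leq_sum => v _.
by rewrite inE; case: ltnP => [|_]; rewrite ?addn1 ?addn0 ?load_ge.
Qed.

End ToDominatingSet.

End Reduction.

Theorem mainTheorem8 (V : finType) (e : rel V) (B k : nat)
    (f : V -> V -> 'I_(B+2))
    (e_sym : symmetric e) (e_irr : irreflexive e)
    (degB : forall v, deg e v <= B)
    (f_inj : forall v, {in closedN e v &, injective (f v)})
    (hk : k <= #|V|) :
  (forall w, deg (gadj e f) w <= B + 2) /\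
  (0 < #|V| -> exists w, deg (gadj e f) w = B + 2) /\
  num_edges (gadj e f) = #|V| * (B + 2) ^ 2 /\
  ((exists D : {set V}, dominating e D /\ #|D| <= k) <->
   (exists (C : {set Vtx e B}) (a : Vtx e B -> Vtx e B -> Vtx e B),
      cap_vc (gadj e f) (cap e f) C a /\ #|C| <= #|V| * (B + 2) + k)).
Proof.
split; first exact: deg_gadj_le.
split; first by case/card_gt0P => v _; exists (Dvtx e B v); exact: deg_D.
split; first exact: num_edges_gadj.
split=> [[D [D_dom card_D]] | [C [a [C_cover card_C]]]].
- exists (dom_cover e B D), (dom_assign D).
  split; first exact: cap_vc_of_dominating.
  by rewrite card_dom_cover leq_add2l.
- exists (dom_of_cover C); split; first exact: dom_of_cover_dominating C_cover.
  by rewrite -(leq_add2l (#|V| * (B + 2))) (leq_trans (card_dom_of_cover C_cover)).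
Qed.
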